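(* Suppose $\mathscr X\in\mathbb R^{I_1\times\cdots\times I_N}$ and $\pi_n$ is a permutation of $\{1,\dots,I_n\}$ for each $1\leq n\leq N$. Let $r$ be a tensor rank function. Then the tensor $\mathscr Y\in\mathbb R^{I_1\times\cdots\times I_N}$ given by $y_{i_1\cdots i_N}=x_{\pi_1(i_1)\cdots\pi_N(i_N)}$ satisfies $r(\mathscr Y)=r(\mathscr X)$.
   Context: $\mathcal T$ is the collection of all real tensors. A rank-one tensor is one of the form $x_{i_1\cdots i_N}=a^{(1)}_{i_1}\cdots a^{(N)}_{i_N}$ with all $\mathbf a^{(n)}$ nonzero vectors. $\mathscr I_{M,N}$ is the order-$N$ tensor of size $M\times\cdots\times M$ with $1$ in positions $(i,\dots,i)$ and $0$ elsewhere. The mode-$n$ product of $\mathscr X\in\mathbb R^{I_1\times\cdots\times I_N}$ with $\mathbf A\in\mathbb R^{J\times I_n}$ is $\mathscr X\times_n\mathbf A$ with entries $\sum_{i_n=1}^{I_n}x_{i_1\cdots i_N}a_{j i_n}$ at position $(i_1,\dots,i_{n-1},j,i_{n+1},\dots,i_N)$. A tensor rank function is a function $r:\mathcal T\to\mathbb N\cup\{0\}$ such that: (TR1) $r(\mathscr X)=1$ iff $\mathscr X$ is rank-one; (TR2) $r(\mathscr I_{M,N})=M$ whenever $N\ge2$; (TR3) for a matrix $\mathscr X\in\mathbb R^{I_1\times I_2}$, $r(\mathscr X)$ is its matrix rank; (TR4) if $\mathscr X\in\mathbb R^{I_1\times\cdots\times I_N}$ and $\mathscr X'$ is the corresponding tensor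 in $\mathbb R^{I_1\times\cdots\times I_N\times1}$, then $r(\mathscr X)=r(\mathscr X')$; (TR5) for $\pi\in S_N$, the tensor $\mathscr Y$ with $y_{i_1\cdots i_N}=x_{i_{\pi(1)}\cdots i_{\pi(N)}}$ satisfies $r(\mathscr Y)=r(\mathscr X)$; (TR6) $r(\mathscr X\times_n\mathbf A)\le r(\mathscr X)$ for all $\mathscr X\in\mathbb R^{I_1\times\cdots\times I_N}$, $n$, and $\mathbf A\in\mathbb R^{J\times I_n}$. *)

From HB Require Import structures.
From mathcomp Require Import all_boot all_order all_algebra all_fingroup.
From Stdlib Require Reals.
From mathcomp Require Import Rstruct.
Notation R := Rdefinitions.R.
Set Implicit Arguments. Unset Strict Implicit. Unset Printing Implicit Defensive.
Import GRing.Theory Num.Theory.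
Local Open Scope ring_scope.

(* Real tensors of arbitrary order N = size s and sizes I_1..I_N = s. *)
Definition idx (s : seq nat) : finType :=
  {dffun forall k : 'I_(size s), 'I_(nth 0%N s k)}.

Record tensor := Tensor { tdims : seq nat; tent : {ffun idx tdims -> R} }.

(* nat value of the k-th coordinate of a multi-index (0 if out of range) *)
Definition ival (s : seq nat) (i : idx s) (k : nat) : nat :=
  if (insub k : option 'I_(size s)) is Some k' then val (i k') else 0%N.

(* A nonzero scalar factor c is allowed; for N >= 1 it can be absorbed into
   a^(1), so this is exactly the paper's notion; for order-0 tensors (scalars)
   it makes exactly the nonzero scalars rank-one. *)
Definition rank_one (X : tensor) : Prop :=
  exists (c : R) (a : forall k : 'I_(size (tdims X)), 'I_(nth 0%N (tdims X) k) -> R),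
    c <> 0 /\ (forall k, exists t, a k t <> 0) /\
    forall i : idx (tdims X), tent X i = c * \prod_(k < size (tdims X)) a k (i k).

Definition diag_tensor (M N : nat) : tensor :=
  @Tensor (nseq N M) [ffun i : idx (nseq N M) =>
    if [forall k, forall l, val (i k) == val (i l)] then 1 else 0].

Definition mat_tensor (I1 I2 : nat) (A : 'M[R]_(I1, I2)) : tensor :=
  @Tensor [:: I1; I2] [ffun i : idx [:: I1; I2] =>
    A (i (@Ordinal 2 0 isT)) (i (@Ordinal 2 1 isT))].

Definition is_tensor_rank_fn (r : tensor -> nat) : Prop :=
  (forall X, r X = 1%N <-> rank_one X) /\
  (forall M N, (2 <= N)%N -> r (diag_tensor M N) = M) /\
  (forall I1 I2 (A : 'M[R]_(I1, I2)), r (mat_tensor A) = \rank A) /\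
  (* TR4 : X' is X viewed in R^{I_1 x..x I_N x 1} *)
  (forall X X', tdims X' = rcons (tdims X) 1%N ->
     (forall (i' : idx (tdims X')) (j : idx (tdims X)),
        (forall k, (k < size (tdims X))%N -> ival i' k = ival j k) ->
        tent X' i' = tent X j) ->
     r X = r X') /\
  (forall N (p : 'S_N) X Y,
     size (tdims X) = N -> size (tdims Y) = N ->
     (forall n : 'I_N, nth 0%N (tdims X) n = nth 0%N (tdims Y) (p n)) ->
     (forall (i : idx (tdims Y)) (j : idx (tdims X)),
        (forall n : 'I_N, ival j n = ival i (p n)) -> tent Y i = tent X j) ->
     r Y = r X) /\
  (* TR6 : Z = X x_n A *)
  (forall X (n : 'I_(size (tdims X))) J (A : 'M[R]_(J, nth 0%N (tdims X) n)) Z,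
     tdims Z = set_nth 0%N (tdims X) n J ->
     (forall i : idx (tdims Z),
        tent Z i = \sum_(j : idx (tdims X) |
                        [forall k : 'I_(size (tdims X)), (k != n) ==> (val (j k) == ival i k)])
                     \sum_(a : 'I_J | val a == ival i n) A a (j n) * tent X j) ->
     (r Z <= r X)%N).

Definition mode_perm (X : tensor)
  (p : forall n : 'I_(size (tdims X)), {perm 'I_(nth 0%N (tdims X) n)}) : tensor :=
  @Tensor (tdims X) [ffun i : idx (tdims X) =>
     tent X (finfun (fun n => p n (i n)) : idx (tdims X))].

(* A permutation of the indices of mode n is the mode-n product with a
   permutation matrix, so by (TR6) it cannot increase the rank.  Permuting the
   modes one at a time shows that [r (mode_perm p) <= r X] for every family of
   permutations [p]; applying this to the inverse family gives the reverse
   inequality. *)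

From HB Require Import structures.
From mathcomp Require Import all_boot all_order all_algebra all_fingroup.
From Stdlib Require Reals.
From mathcomp Require Import Rstruct.
Set Implicit Arguments. Unset Strict Implicit. Unset Printing Implicit Defensive.
Import GRing.Theory Num.Theory.
Local Open Scope ring_scope.

Lemma ival_ord (s : seq nat) (i : idx s) (k : 'I_(size s)) : ival i k = val (i k).
Proof. by rewrite /ival valK. Qed.

Lemma set_nth_nth (s : seq nat) n : (n < size s)%N -> set_nth 0%N s n (nth 0%N s n) = s.
Proof.
move=> lt_n_s; apply: (@eq_from_nth _ 0%N) => [|k _].
  by rewrite size_set_nth; apply/maxn_idPr.
by rewrite nth_set_nth /=; case: eqP => [->|].
Qed.

Section ModePerm.

Variable X : tensor.

Local Notation mode k := 'I_(nth 0%N (tdims X) k).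
Local Notation perm_family := (forall k : 'I_(size (tdims X)), {perm mode k}).

Definition restrict_perms (p : perm_family) (P : pred 'I_(size (tdims X))) : perm_family :=
  fun k => if P k then p k else 1%g.

Lemma eq_mode_perm (p q : perm_family) : (forall k, p k = q k) -> mode_perm p = mode_perm q.
Proof.
move=> eq_pq; congr Tensor; apply/ffunP => i; rewrite !ffunE.
by congr (tent X _); apply/ffunP => k; rewrite !ffunE eq_pq.
Qed.

Lemma mode_perm1 : mode_perm (fun k => 1%g : {perm mode k}) = X.
Proof.
case: X => s t; congr Tensor; apply/ffunP => i; rewrite ffunE.
by congr (t _); apply/ffunP => k; rewrite ffunE perm1.
Qed.

Lemma mode_permM (p q : perm_family) :
  @mode_perm (mode_perm p) q = mode_perm (fun k => q k * p k)%g.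
Proof.
congr Tensor; apply/ffunP => i; rewrite !ffunE.
by congr (tent X _); apply/ffunP => k; rewrite !ffunE permM.
Qed.

Lemma mode_permK (p : perm_family) : @mode_perm (mode_perm p) (fun k => (p k)^-1)%g = X.
Proof.
by rewrite mode_permM (eq_mode_perm (q := fun k => 1%g)) ?mode_perm1 // => k; rewrite mulVg.
Qed.

(* Only the entry [j0] of [X] with [j0 n = p n (i n)] and [j0 k = i k] for
   [k != n] survives the double sum. *)
Lemma mode_perm_pred1_mode_product (p : perm_family) (n : 'I_(size (tdims X)))
    (i : idx (tdims X)) :
  tent (mode_perm (restrict_perms p (pred1 n))) i =
  \sum_(j : idx (tdims X) |
          [forall k : 'I_(size (tdims X)), (k != n) ==> (val (j k) == ival i k)])
    \sum_(a : mode n | val a == ival i n) perm_mx (p n) a (j n) * tent X j.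
Proof.
pose j0 : idx (tdims X) := finfun (fun k => restrict_perms p (pred1 n) k (i k)).
rewrite [LHS]ffunE -/j0.
have sum_mode_n (j : idx (tdims X)) :
    \sum_(a : mode n | val a == ival i n) perm_mx (p n) a (j n) * tent X j =
    (p n (i n) == j n)%:R * tent X j.
  by rewrite (big_pred1 (i n)) => [|a]; rewrite ?mxE // ival_ord val_eqE.
have j0_off_n k : k != n -> j0 k = i k.
  by move=> /negbTE k_n; rewrite ffunE /restrict_perms /= k_n perm1.
rewrite (bigD1 j0) /=; last first.
  by apply/forallP => k; apply/implyP => k_n; rewrite j0_off_n // ival_ord.
rewrite sum_mode_n big1 => [|j /andP[/forallP j_i j_j0]].
  by rewrite ffunE /restrict_perms /= !eqxx mul1r addr0.
rewrite sum_mode_n; case: eqP => [j0_n|]; rewrite ?mul0r //.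
case/eqP: j_j0; apply/ffunP => k; have [-> | k_n] := eqVneq k n.
  by rewrite -j0_n ffunE /restrict_perms /= eqxx.
by rewrite j0_off_n //; apply/val_inj/eqP; move: (j_i k); rewrite k_n ival_ord.
Qed.

Variable r : tensor -> nat.
Hypothesis r_rank : is_tensor_rank_fn r.

Lemma rank_mode_perm_pred1_le (p : perm_family) n :
  (r (mode_perm (restrict_perms p (pred1 n))) <= r X)%N.
Proof.
have [_ [_ [_ [_ [_ rank_mode_product_le]]]]] := r_rank.
apply: (rank_mode_product_le X n _ (perm_mx (p n))); first by rewrite set_nth_nth.
exact: mode_perm_pred1_mode_product.
Qed.

End ModePerm.

Lemma rank_mode_perm_le (r : tensor -> nat) (X : tensor) p :
  is_tensor_rank_fn r -> (r (@mode_perm X p) <= r X)%N.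
Proof.
move=> r_rank; pose first_modes m := restrict_perms p (fun k => k < m)%N.
have -> : mode_perm p = mode_perm (first_modes (size (tdims X))).
  by apply: eq_mode_perm => k; rewrite /first_modes /restrict_perms ltn_ord.
elim: (size (tdims X)) => [|m IHm].
  by rewrite (eq_mode_perm (q := fun k => 1%g)) ?mode_perm1.
case: (ltnP m (size (tdims X))) => [lt_m_s | le_s_m].
  pose n := Ordinal lt_m_s.
  have -> : mode_perm (first_modes m.+1) =
            @mode_perm (mode_perm (first_modes m)) (restrict_perms p (pred1 n)).
    rewrite mode_permM; apply: eq_mode_perm => k; rewrite /first_modes /restrict_perms /=.
    have [->|k_n] := eqVneq k n; first by rewrite /= ltnSn ltnn mulg1.
    by rewrite ltnS leq_eqVlt -[val k == m]/(k == n) (negbTE k_n) mul1g.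
  by apply: leq_trans IHm; apply: rank_mode_perm_pred1_le.
rewrite (eq_mode_perm (q := first_modes m)) // => k.
by rewrite /first_modes /restrict_perms !(leq_trans (ltn_ord k)) ?(leq_trans le_s_m).
Qed.

Theorem proposition4p4 (r : tensor -> nat) (Hr : is_tensor_rank_fn r)
  (X : tensor) (p : forall n : 'I_(size (tdims X)), {perm 'I_(nth 0%N (tdims X) n)}) :
  r (mode_perm p) = r X.
Proof.
apply/eqP; rewrite eqn_leq rank_mode_perm_le //=.
have := rank_mode_perm_le (fun k : 'I_(size (tdims (mode_perm p))) => (p k)^-1)%g Hr.
by rewrite mode_permK.
Qed.
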